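(* Let $\mathcal{T}\in\mathbb{K}^{R\times R\times K}$ have $\mathbb{K}$-rank $R$ and full multilinear rank $(R,R,K)$, and let $\mathcal{T}=[\![\mathbf{A},\mathbf{B},\mathbf{C}]\!]$ be a CPD of $\mathcal{T}$. Then $\mathcal{T}$ is slice mix invertible and the factor matrices $\mathbf{A},\mathbf{B}\in\mathbb{K}^{R\times R}$ are invertible.
   Context: $\mathbb{K}$ denotes $\mathbb{R}$ or $\mathbb{C}$. The $\mathbb{K}$-rank is the least number of rank one tensors $\mathbf{a}\otimes\mathbf{b}\otimes\mathbf{c}$ with $\mathbb{K}$-valued factors summing to the tensor; a minimal sum $\sum_{r=1}^R\mathbf{a}_r\otimes\mathbf{b}_r\otimes\mathbf{c}_r$ is a CPD written $[\![\mathbf{A},\mathbf{B},\mathbf{C}]\!]$ (columns $\mathbf{a}_r$, etc.). Multilinear rank $(R_1,R_2,R_3)$: $R_i$ is the dimension of the span of the mode-$i$ fibers. $\mathcal{T}$ is slice mix invertible if some linear combination of its frontal slices $\mathcal{T}(:,:,k)$ is an invertible matrix. *)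

(* K is R (a realType, i.e. the real numbers) or its complexification R[i]. *)
From HB Require Import structures.
From mathcomp Require Import all_boot all_order all_algebra.
From mathcomp Require Import complex.
From mathcomp Require Import reals.
Set Implicit Arguments. Unset Strict Implicit. Unset Printing Implicit Defensive.
Import Order.TTheory GRing.Theory Num.Theory.
Local Open Scope ring_scope.

Definition tensor3 (F : Type) (m n p : nat) := 'I_m -> 'I_n -> 'I_p -> F.

(* [[A, B, C]] = \sum_r a_r (x) b_r (x) c_r, columns a_r = A(:,r) etc. *)
Definition cpd (F : fieldType) (m n p r : nat)
  (A : 'M[F]_(m, r)) (B : 'M[F]_(n, r)) (C : 'M[F]_(p, r)) : tensor3 F m n p :=
  fun i j k => \sum_(s < r) A i s * B j s * C k s.

Definition teq (F : Type) m n p (T U : tensor3 F m n p) :=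
  forall i j k, T i j k = U i j k.

Definition sum_of_rank1 (F : fieldType) m n p (T : tensor3 F m n p) (r : nat) :=
  exists (A : 'M[F]_(m, r)) (B : 'M[F]_(n, r)) (C : 'M[F]_(p, r)),
    teq T (cpd A B C).

Definition has_rank (F : fieldType) m n p (T : tensor3 F m n p) (r : nat) :=
  sum_of_rank1 T r /\ forall r', (r' < r)%N -> ~ sum_of_rank1 T r'.

Definition mode1_rank (F : fieldType) m n p (T : tensor3 F m n p) : nat :=
  \rank (\sum_(j < n) \sum_(k < p) <<(\row_(i < m) T i j k : 'rV[F]_m)>>)%MS.
Definition mode2_rank (F : fieldType) m n p (T : tensor3 F m n p) : nat :=
  \rank (\sum_(i < m) \sum_(k < p) <<(\row_(j < n) T i j k : 'rV[F]_n)>>)%MS.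
Definition mode3_rank (F : fieldType) m n p (T : tensor3 F m n p) : nat :=
  \rank (\sum_(i < m) \sum_(j < n) <<(\row_(k < p) T i j k : 'rV[F]_p)>>)%MS.

Definition has_mlrank (F : fieldType) m n p (T : tensor3 F m n p) (r1 r2 r3 : nat) :=
  [/\ mode1_rank T = r1, mode2_rank T = r2 & mode3_rank T = r3].

Definition frontal_slice (F : fieldType) m n p (T : tensor3 F m n p) (k : 'I_p)
  : 'M[F]_(m, n) := \matrix_(i, j) T i j k.

Definition slice_mix_invertible (F : fieldType) n p (T : tensor3 F n n p) :=
  exists w : 'I_p -> F, (\sum_(k < p) w k *: frontal_slice T k) \in unitmx.

Definition lemma3p1_over (F : fieldType) :=
  forall (Rn Kn : nat) (T : tensor3 F Rn Rn Kn),
    has_rank T Rn -> has_mlrank T Rn Rn Kn ->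
    forall (A : 'M[F]_(Rn, Rn)) (B : 'M[F]_(Rn, Rn)) (C : 'M[F]_(Kn, Rn)),
      teq T (cpd A B C) ->
      [/\ slice_mix_invertible T, A \in unitmx & B \in unitmx].

(* The mode-1 (mode-2) fibers of [[A, B, C]] lie in the column space of A
   (of B), so full multilinear rank forces the square factors A and B to be
   invertible.  Minimality of the rank forces every column of C to be
   nonzero, since a zero column could be dropped from the decomposition.
   The slice mix with weights w is A diag(w^T c_r) B^T; taking w = (t^k)_k
   turns each w^T c_r into a nonzero polynomial in t, and a point t where
   their product does not vanish exists in characteristic zero. *)
From mathcomp Require Import all_boot all_order all_algebra complex reals.
From mathcomp Require Import ring.
Set Implicit Arguments. Unset Strict Implicit. Unset Printing Implicit Defensive.
Import GRing.Theory Num.Theory.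
Local Open Scope ring_scope.

Lemma rank_sumsmx_mulmx_le (F : fieldType) (I J : finType) r m
    (v : I -> J -> 'rV[F]_r) (M : 'M[F]_(r, m)) :
  (\rank (\sum_i \sum_j <<v i j *m M>>)%MS <= \rank M)%N.
Proof.
apply: mxrankS; apply/sumsmx_subP => i _; apply/sumsmx_subP => j _.
by rewrite genmxE submxMl.
Qed.

Section CanonicalPolyadic.

Variables (F : fieldType) (m n p r : nat).
Variables (T : tensor3 F m n p) (A : 'M[F]_(m, r)) (B : 'M[F]_(n, r)).
Variable C : 'M[F]_(p, r).
Hypothesis defT : teq T (cpd A B C).

Lemma cpd_mode1_fiber j k :
  \row_i T i j k = \row_s (B j s * C k s) *m A^T.
Proof.
apply/rowP => i; rewrite !mxE defT; apply: eq_bigr => s _; rewrite !mxE; ring.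
Qed.

Lemma cpd_mode2_fiber i k :
  \row_j T i j k = \row_s (A i s * C k s) *m B^T.
Proof.
apply/rowP => j; rewrite !mxE defT; apply: eq_bigr => s _; rewrite !mxE; ring.
Qed.

Lemma mode1_rank_row_free : mode1_rank T = m -> row_free A.
Proof.
move=> rkT; rewrite /row_free eqn_leq rank_leq_row -{1}rkT -mxrank_tr.
rewrite /mode1_rank; under eq_bigr do under eq_bigr do rewrite cpd_mode1_fiber.
exact: rank_sumsmx_mulmx_le.
Qed.

Lemma mode2_rank_row_free : mode2_rank T = n -> row_free B.
Proof.
move=> rkT; rewrite /row_free eqn_leq rank_leq_row -{1}rkT -mxrank_tr.
rewrite /mode2_rank; under eq_bigr do under eq_bigr do rewrite cpd_mode2_fiber.
exact: rank_sumsmx_mulmx_le.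
Qed.

Lemma cpd_col'_eq s : col s C = 0 ->
  teq T (cpd (col' s A) (col' s B) (col' s C)).
Proof.
move=> Cs0 i j k; rewrite defT /cpd (bigD1_ord s) //=.
have -> : C k s = 0 by move/colP/(_ k): Cs0; rewrite !mxE.
by rewrite mulr0 add0r; apply: eq_bigr => t _; rewrite !mxE.
Qed.

Lemma has_rank_col_neq0 : has_rank T r -> forall s, col s C != 0.
Proof.
move=> [_ rT_min] s; apply/negP => /eqP Cs0.
apply: (rT_min r.-1); first by rewrite prednK ?ltnSn // (leq_ltn_trans _ (ltn_ord s)).
by exists (col' s A), (col' s B), (col' s C); exact: cpd_col'_eq.
Qed.

Lemma slice_mix_cpd (w : 'I_p -> F) :
  \sum_(k < p) w k *: frontal_slice T k
    = A *m diag_mx (\row_s \sum_(k < p) w k * C k s) *m B^T.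
Proof.
apply/matrixP => i j; rewrite summxE mul_mx_diag !mxE.
under eq_bigr do rewrite !mxE defT /cpd mulr_sumr.
rewrite exchange_big; apply: eq_bigr => s _; rewrite !mxE mulr_sumr mulr_suml.
by apply: eq_bigr => k _; ring.
Qed.

End CanonicalPolyadic.

Lemma exists_nonroot (F : numDomainType) (P : {poly F}) :
  P != 0 -> exists t, ~~ root P t.
Proof.
move=> P_neq0; pose ts := [seq i%:R | i <- iota 0 (size P)] : seq F.
have [/allPn [t _ Pt]|/negbNE roots_ts] := boolP (~~ all (root P) ts).
  by exists t.
have ts_uniq : uniq ts by rewrite map_inj_uniq ?iota_uniq // => a b /eqP/[!eqr_nat]/eqP.
by have := max_poly_roots P_neq0 roots_ts ts_uniq; rewrite size_map size_iota ltnn.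
Qed.

Lemma exists_weights_nonorthogonal (F : numFieldType) p r (C : 'M[F]_(p, r)) :
  (forall s, col s C != 0) ->
  exists w : 'I_p -> F, forall s, \sum_(k < p) w k * C k s != 0.
Proof.
move=> C_neq0; pose q s : {poly F} := rVpoly (col s C)^T.
have q_neq0 s : q s != 0.
  apply: contra (C_neq0 s) => /eqP/(congr1 (@poly_rV _ p)).
  by rewrite /q rVpolyK linear0 => /eqP; rewrite trmx_eq0.
have prod_q_neq0 : \prod_s q s != 0 by apply/prodf_neq0 => s _; apply: q_neq0.
have [t Pt] := exists_nonroot prod_q_neq0.
exists (fun k => t ^+ k) => s; apply: contra Pt => /eqP Cts0.
rewrite /root horner_prod (bigD1 s) //= horner_poly.
rewrite (eq_bigr (fun k : 'I_p => t ^+ k * C k s)); last first.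
  by move=> k _; rewrite valK !mxE mulrC.
by rewrite Cts0 mul0r.
Qed.

Lemma slice_mix_invertible_cpd (F : numFieldType) n p (T : tensor3 F n n p)
    (A B : 'M[F]_n) (C : 'M[F]_(p, n)) :
  teq T (cpd A B C) -> A \in unitmx -> B \in unitmx ->
  (forall s, col s C != 0) -> slice_mix_invertible T.
Proof.
move=> defT A_unit B_unit /exists_weights_nonorthogonal [w w_C].
exists w; rewrite (slice_mix_cpd defT) !unitmx_mul unitmx_tr A_unit B_unit andbT.
rewrite unitmxE det_diag unitfE; apply/prodf_neq0 => s _; rewrite mxE; exact: w_C.
Qed.

Lemma lemma3p1_over_num (F : numFieldType) : lemma3p1_over F.
Proof.
move=> n p T rkT [rk1 rk2 _] A B C defT.
have A_unit : A \in unitmx by rewrite -row_free_unit (mode1_rank_row_free defT).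
have B_unit : B \in unitmx by rewrite -row_free_unit (mode2_rank_row_free defT).
split=> //; apply: (slice_mix_invertible_cpd defT) => //.
exact: has_rank_col_neq0 defT rkT.
Qed.

Theorem lemma3p1 (R : realType) : lemma3p1_over R /\ lemma3p1_over R[i].
Proof. by split; apply: lemma3p1_over_num. Qed.
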